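(* In the receding-horizon platoon coordination setting at decision instance $t^\star_n$ described in the context, with deterministic travel times $\bar\tau_n(e,t)\in\mathbb Z_+$ and given remaining times $\tau^i_n\in\mathbb Z_+$, the game $G^d_n=(\mathcal N,\mathcal W_n,\{U^i_n(\cdot,\bar\tau_n)\}_{i\in\mathcal N})$ is an exact potential game and thus admits at least one pure Nash equilibrium.
   Context: Setting: a directed graph $\mathcal G=(\mathcal V,\mathcal E)$, vehicles $\mathcal N=\{1,\dots,N\}$, vehicle $i$ having a fixed path of edges $e^i_1,\dots,e^i_{|\mathcal P^i|}$ with $e^i_k$ from node $v^i_k$ to $v^i_{k+1}$. At a decision instance $t^\star_n\in\mathbb Z_+$, each vehicle $i$ will next be at node $v^i_{a_i}$ after $\tau^i_n\in\mathbb Z_+$ further time steps ($\tau^i_n=0$ if it is currently at that node), and decides waiting times $\boldsymbol w^i_n=(w^i_{a_i,n},\dots,w^i_{b_i,n})\in\mathbb Z_+^{b_i-a_i+1}$ at nodes $v^i_{a_i},\dots,v^i_{b_i}$, for given indices $1\le a_i\le b_i\le|\mathcal P^i|$ (in the receding-horizon scheme with horizon $H$: if vehicle $i$ is on edge $e^i_j$ then $a_i=j+1$, $b_i=j+H$; if it is at node $v^i_k$ then $a_i=k$, $b_i=k+H$), chosen from a finite set $\mathcal W^i_n$; $\mathcal W_n=\mathcal W^1_n\times\dots\times\mathcal W^N_n$. Travel times are given by $\bar\tau_n(e,t)\in\mathbb Z_+$ (in the paper, the rounded conditional mean of the travel time on $e$ entered at $t$, given the history observed up to $t^\star_n$). Departure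 times are $d^i_{a_i}=t^\star_n+\tau^i_n+w^i_{a_i,n}$ and $d^i_{l+1}=d^i_l+\bar\tau_n(e^i_l,d^i_l)+w^i_{l+1,n}$ for $a_i\le l<b_i$. Let $C_n(e,t)=\{i\in\mathcal N:\exists k\in\{a_i,\dots,b_i\},\ e^i_k=e,\ d^i_k=t\}$. With a reward function $R:\mathbb Z_{\ge1}\times\mathcal E\to\mathbb R$ and waiting costs $\Lambda_i:\mathcal W^i_n\to\mathbb R$, the utility of vehicle $i$ is $$U^i_n(\boldsymbol w^i_n,\boldsymbol w^{-i}_n,\bar\tau_n)=\sum_{k=a_i}^{b_i}R\big(|C_n(e^i_k,d^i_k)|,e^i_k\big)-\Lambda_i(\boldsymbol w^i_n).$$ An exact potential game is one admitting a function $\Phi$ on action profiles such that any unilateral action change of a player changes $\Phi$ by exactly the change of that player's utility; a pure Nash equilibrium is a profile from which no player can profitably deviate unilaterally. *)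

From mathcomp Require Import all_boot all_order all_algebra.
Set Implicit Arguments. Unset Strict Implicit. Unset Printing Implicit Defensive.
Import Order.TTheory GRing.Theory Num.Theory.
Local Open Scope ring_scope.

(* A vehicle path is given by its node
   sequence [v_1; ...; v_{m+1}]; its edges are e_k = (v_k, v_{k+1}). *)
Definition path_edges (V : Type) (s : seq V) : seq (V * V) := zip s (behead s).

Definition is_graph_path (V : eqType) (G : rel V) (s : seq V) : Prop :=
  [/\ (1 < size s)%N, all (fun e => G e.1 e.2) (path_edges s) & uniq s].

(* deps tb t es ws: given the time t at which the vehicle reaches the first
   node of the edge list es, the waiting times ws at the successive nodes,
   returns the list of (edge, departure time) pairs:
   d_1 = t + w_1, d_{l+1} = d_l + tb(e_l, d_l) + w_{l+1}. *)
Fixpoint deps (E : Type) (tb : E -> nat -> nat) (t : nat) (es : seq E)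
  (ws : seq nat) : seq (E * nat) :=
  match es, ws with
  | e :: es', w :: ws' => let d := (t + w)%N in (e, d) :: deps tb (d + tb e d)%N es' ws'
  | _, _ => [::]
  end.

(* edges e^i_{a}, ..., e^i_{b} (1-based indices) of a path *)
Definition horizon_edges (V : Type) (s : seq V) (a b : nat) : seq (V * V) :=
  take (b - a + 1) (drop (a - 1) (path_edges s)).

Section Games.
Variables (R : numDomainType) (N : nat) (S : Type).

Definition upd (w : 'I_N -> S) (i : 'I_N) (s : S) : 'I_N -> S :=
  fun j => if j == i then s else w j.

Definition feasible_profile (feasible : 'I_N -> S -> Prop) (w : 'I_N -> S) :=
  forall j, feasible j (w j).

Definition exact_potential_game (feasible : 'I_N -> S -> Prop)
  (U : 'I_N -> ('I_N -> S) -> R) : Prop :=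
  exists Phi : ('I_N -> S) -> R,
    forall w, feasible_profile feasible w ->
    forall i s, feasible i s ->
      Phi (upd w i s) - Phi w = U i (upd w i s) - U i w.

Definition pure_nash_equilibrium (feasible : 'I_N -> S -> Prop)
  (U : 'I_N -> ('I_N -> S) -> R) (w : 'I_N -> S) : Prop :=
  feasible_profile feasible w /\
  forall i s, feasible i s -> U i (upd w i s) <= U i w.
End Games.

Section Platoon.
Variables (R : numDomainType) (V : eqType) (N : nat).
Variables (P : 'I_N -> seq V)
          (a b : 'I_N -> nat)
          (tstar : nat)
          (tau : 'I_N -> nat)
          (tbar : V * V -> nat -> nat).

Definition plan (w : 'I_N -> seq nat) (i : 'I_N) : seq ((V * V) * nat) :=
  deps tbar (tstar + tau i)%N (horizon_edges (P i) (a i) (b i)) (w i).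

Definition congestion (w : 'I_N -> seq nat) (e : V * V) (t : nat) : nat :=
  #|[set j : 'I_N | (e, t) \in plan w j]|.

Definition utility (Rw : nat -> V * V -> R) (Lam : 'I_N -> seq nat -> R)
  (i : 'I_N) (w : 'I_N -> seq nat) : R :=
  \sum_(p <- plan w i) Rw (congestion w p.1 p.2) p.1 - Lam i (w i).
End Platoon.

(* The platoon game is a congestion game: every vehicle occupies the resources
   (e, d^i_e) of its plan, its reward on a resource depends only on how many
   vehicles occupy it, and the waiting cost depends only on its own action.
   Rosenthal's potential, the sum over resources r of R(1, r) + ... +
   R(|C(r)|, r) minus all waiting costs, changes under a unilateral deviation
   of vehicle i exactly as the utility of i, because the part of it that
   does not involve i is unaffected by the deviation.  Since the action sets
   are finite and nonempty, a feasible profile maximising the potential is a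
   pure Nash equilibrium. *)
From mathcomp Require Import all_boot all_order all_algebra.
From mathcomp Require Import ring.
From Stdlib Require Import FunctionalExtensionality.
Set Implicit Arguments. Unset Strict Implicit. Unset Printing Implicit Defensive.
Import Order.TTheory GRing.Theory Num.Theory.
Local Open Scope ring_scope.

Lemma upd_feasible_profile (N : nat) (S : Type) (feasible : 'I_N -> S -> Prop)
    (w : 'I_N -> S) (i : 'I_N) (s : S) :
  feasible_profile feasible w -> feasible i s ->
  feasible_profile feasible (upd w i s).
Proof. by move=> Hw Hs j; rewrite /upd; case: eqP => [->|]. Qed.

Section FiniteGames.
Variables (R : realDomainType) (N : nat) (S : eqType) (W : 'I_N -> seq S).
Hypothesis W_neq0 : forall i, W i != [::].

Definition profile_of (f : {dffun forall i : 'I_N, 'I_(size (W i))}) : 'I_N -> S :=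
  fun i => tnth (in_tuple (W i)) (f i).

Lemma feasible_profile_of f :
  feasible_profile (fun i s => s \in W i) (profile_of f).
Proof. by move=> i; apply: mem_tnth. Qed.

Lemma feasible_profile_ofP (w : 'I_N -> S) :
  feasible_profile (fun i s => s \in W i) w -> exists f, w = profile_of f.
Proof.
move=> Hw; pose idx i : 'I_(size (W i)) := Ordinal (etrans (index_mem _ _) (Hw i)).
exists [ffun i => idx i]; apply: functional_extensionality => i.
by rewrite /profile_of ffunE (tnth_nth (w i)) nth_index.
Qed.

Lemma feasible_argmax (F : ('I_N -> S) -> R) :
  exists2 w, feasible_profile (fun i s => s \in W i) w &
    forall w', feasible_profile (fun i s => s \in W i) w' -> F w' <= F w.
Proof.
have W_gt0 i : (0 < size (W i))%N by rewrite lt0n size_eq0.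
pose f0 : {dffun forall i : 'I_N, 'I_(size (W i))} := [ffun i => Ordinal (W_gt0 i)].
case: (@arg_maxP _ _ _ f0 predT (F \o profile_of) isT) => f _ Fmax.
exists (profile_of f) => [|w' /feasible_profile_ofP [f' ->]].
  exact: feasible_profile_of.
exact: Fmax.
Qed.

Theorem exact_potential_game_pure_nash (U : 'I_N -> ('I_N -> S) -> R) :
  exact_potential_game (fun i s => s \in W i) U ->
  exists w, pure_nash_equilibrium (fun i s => s \in W i) U w.
Proof.
case=> Phi Phi_exact; have [w Hw Phi_max] := feasible_argmax Phi.
exists w; split=> // i s Hs.
rewrite -subr_le0 -Phi_exact // subr_le0.
exact: Phi_max (upd_feasible_profile Hw Hs).
Qed.

End FiniteGames.

Section CongestionGames.
Variables (R : numDomainType) (N : nat) (S : Type) (T : eqType).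
Variables (res : 'I_N -> S -> seq T) (rw : nat -> T -> R) (cost : 'I_N -> S -> R).

Definition load (w : 'I_N -> S) (r : T) : nat := #|[set j | r \in res j (w j)]|.

Definition load_others (w : 'I_N -> S) (i : 'I_N) (r : T) : nat :=
  #|[set j | (j != i) && (r \in res j (w j))]|.

Definition congestion_utility (i : 'I_N) (w : 'I_N -> S) : R :=
  \sum_(r <- res i (w i)) rw (load w r) r - cost i (w i).

Definition rosenthal_potential (L : seq T) (w : 'I_N -> S) : R :=
  \sum_(r <- L) \sum_(k < load w r) rw k.+1 r - \sum_j cost j (w j).

Definition rosenthal_potential_others (L : seq T) (w : 'I_N -> S) (i : 'I_N) : R :=
  \sum_(r <- L) \sum_(k < load_others w i r) rw k.+1 r
  - \sum_(j | j != i) cost j (w j).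

Lemma load_split w i r : load w r = ((r \in res i (w i)) + load_others w i r)%N.
Proof.
rewrite /load cardsE (cardD1 i); congr (_ + _)%N.
by apply: eq_card => j; rewrite !inE.
Qed.

Lemma load_others_upd w i s r : load_others (upd w i s) i r = load_others w i r.
Proof. by apply: eq_card => j; rewrite !inE /upd; case: eqP. Qed.

Lemma rosenthal_potential_others_upd L w i s :
  rosenthal_potential_others L (upd w i s) i = rosenthal_potential_others L w i.
Proof.
rewrite /rosenthal_potential_others; congr (_ - _).
  by apply: eq_bigr => r _; rewrite load_others_upd.
by apply: eq_bigr => j /negbTE; rewrite /upd => ->.
Qed.

(* Resources need not form a finite type (departure times are unbounded), so
   the potential sums over a duplicate-free list L covering all feasible plans;
   duplicate-free plans are needed because [load] counts a player only once. *)
Variables (feasible : 'I_N -> S -> Prop) (L : seq T).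
Hypotheses (L_uniq : uniq L) (res_uniq : forall i s, uniq (res i s)).
Hypothesis res_sub_L : forall i s, feasible i s -> {subset res i s <= L}.

Lemma rosenthal_potential_split w i : feasible i (w i) ->
  rosenthal_potential L w = congestion_utility i w + rosenthal_potential_others L w i.
Proof.
move=> Hi; set used := res i (w i).
have loads : \sum_(r <- L) \sum_(k < load w r) rw k.+1 r =
    \sum_(r <- L) \sum_(k < load_others w i r) rw k.+1 r +
    \sum_(r <- L | r \in used) rw (load w r) r.
  rewrite [X in _ + X]big_mkcond -big_split /=; apply: eq_bigr => r _.
  rewrite (load_split w i); case: (r \in used) => /=.
    by rewrite add1n big_ord_recr.
  by rewrite addr0.
have used_sum : \sum_(r <- L | r \in used) rw (load w r) r =
    \sum_(r <- used) rw (load w r) r.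
  rewrite -big_filter; apply/perm_big/uniq_perm; rewrite ?filter_uniq ?res_uniq //.
  by move=> r; rewrite mem_filter andb_idr //; apply: res_sub_L.
rewrite /rosenthal_potential loads used_sum (bigD1 i) //=.
rewrite /congestion_utility /rosenthal_potential_others; ring.
Qed.

Theorem rosenthal_potential_exact :
  exact_potential_game feasible congestion_utility.
Proof.
exists (rosenthal_potential L) => w Hw i s Hs.
have Hs' : feasible i (upd w i s i) by rewrite /upd eqxx.
rewrite (rosenthal_potential_split (Hw i)) (rosenthal_potential_split Hs').
by rewrite rosenthal_potential_others_upd; ring.
Qed.

End CongestionGames.

Lemma deps_uniq (E : eqType) (tb : E -> nat -> nat) (t : nat)
    (es : seq E) (ws : seq nat) :
  uniq es -> uniq (deps tb t es ws).
Proof.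
have deps_fst : map fst (deps tb t es ws) = take (size ws) es.
  by elim: es t ws => [|e es IH] t [|w ws] //=; rewrite IH.
by move=> es_uniq; apply: (@map_uniq _ _ fst); rewrite deps_fst take_uniq.
Qed.

Lemma horizon_edges_uniq (V : eqType) (G : rel V) (s : seq V) (a b : nat) :
  is_graph_path G s -> uniq (horizon_edges s a b).
Proof. by case=> _ _ s_uniq; rewrite take_uniq // drop_uniq // zip_uniql. Qed.

Lemma utility_congestionE (R : numDomainType) (V : eqType) (N : nat)
    (P : 'I_N -> seq V) (a b : 'I_N -> nat) (tstar : nat) (tau : 'I_N -> nat)
    (tbar : V * V -> nat -> nat) (Rw : nat -> V * V -> R) (Lam : 'I_N -> seq nat -> R) :
  utility P a b tstar tau tbar Rw Lam =
  congestion_utility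
    (fun i s => deps tbar (tstar + tau i) (horizon_edges (P i) (a i) (b i)) s)
    (fun k p => Rw k p.1) Lam.
Proof.
apply: functional_extensionality => i; apply: functional_extensionality => w.
by congr (_ - _); apply: eq_bigr => -[[e t]].
Qed.

Theorem corollary1
  (R : realFieldType) (V : finType) (G : rel V) (N : nat)
  (P : 'I_N -> seq V)
  (HP : forall i, is_graph_path G (P i))
  (a b : 'I_N -> nat)
  (Hab : forall i, (1 <= a i)%N /\ (a i <= b i)%N /\ (b i <= size (path_edges (P i)))%N)
  (tstar : nat) (tau : 'I_N -> nat) (tbar : V * V -> nat -> nat)
  (W : 'I_N -> seq (seq nat))
  (HWsize : forall i s, s \in W i -> size s = (b i - a i + 1)%N)
  (HWne : forall i, W i != [::])
  (Rw : nat -> V * V -> R) (Lam : 'I_N -> seq nat -> R) :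
  let feasible := fun (i : 'I_N) (s : seq nat) => s \in W i in
  let U := utility P a b tstar tau tbar Rw Lam in
  exact_potential_game feasible U /\
  exists w, pure_nash_equilibrium feasible U w.
Proof.
move=> feasible U.
pose plan_of i s := deps tbar (tstar + tau i) (horizon_edges (P i) (a i) (b i)) s.
pose L := undup (flatten [seq plan_of i s | i <- enum 'I_N, s <- W i]).
have plan_uniq i s : uniq (plan_of i s) by apply/deps_uniq/horizon_edges_uniq/HP.
have plan_sub_L i s : feasible i s -> {subset plan_of i s <= L}.
  move=> Hs r Hr; rewrite mem_undup; apply/flattenP; exists (plan_of i s) => //.
  by apply/allpairsPdep; exists i, s; rewrite mem_enum.
have U_potential : exact_potential_game feasible U.
  rewrite /U utility_congestionE.
  exact: rosenthal_potential_exact (undup_uniq _) plan_uniq plan_sub_L.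
by split=> //; apply: exact_potential_game_pure_nash.
Qed.
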